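(* Let $X$ be an infinite compact metrizable space and $h\colon X\to X$ a minimal homeomorphism, and let $\varepsilon>0$. (1) For any non-empty open $U\subset X$ there is a non-empty open $E\subset U$ with $\mu(E)<\varepsilon$ for all $\mu\in M_h(X)$. (2) For any non-empty open $U\subset X$ with $\partial U$ universally null, there is a closed set $K\subset U$ with $\mathrm{int}(K)\neq\varnothing$ such that $\mu(U\setminus K)<\varepsilon$ for all $\mu\in M_h(X)$. (3) For any non-empty open $U\subset X$ with $\partial U$ universally null, there is an open set $E\subset U$ with $\overline{E}\subset U$ such that $\mu(U\setminus\overline{E})<\varepsilon$ for all $\mu\in M_h(X)$. (4) For any closed $K\subset X$ with $\partial K$ universally null, there is an open set $E\subset X$ with $K\subset E$ and $\mu(E\setminus K)<\varepsilon$ for all $\mu\in M_h(X)$.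
   Context: $M_h(X)$ denotes the set of $h$-invariant Borel probability measures on $X$. A Borel set is universally null if it has measure $0$ for all $\mu\in M_h(X)$. $\partial A$ denotes the boundary of $A$. *)

From HB Require Import structures.
From mathcomp Require Import all_boot all_order all_algebra.
From mathcomp Require Import all_classical all_reals all_analysis.
Set Implicit Arguments. Unset Strict Implicit. Unset Printing Implicit Defensive.
Import Order.TTheory GRing.Theory Num.Theory.
Local Open Scope classical_set_scope.
Local Open Scope ring_scope.

Definition borel (X : ptopologicalType) := g_sigma_algebraType (@open X).

Definition homeomorphism (X : topologicalType) (h : X -> X) : Prop :=
  exists g : X -> X, [/\ cancel h g, cancel g h, continuous h & continuous g].

Definition minimal_map (X : topologicalType) (h : X -> X) : Prop :=
  forall A : set X, closed A -> h @` A = A -> A = set0 \/ A = setT.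

Definition invariant_measure (R : realType) (X : ptopologicalType) (h : X -> X)
    (mu : probability (borel X) R) : Prop :=
  forall A : set (borel X), measurable A -> mu (h @^-1` A) = mu A.

Definition universally_null (R : realType) (X : ptopologicalType) (h : X -> X)
    (B : set X) : Prop :=
  (measurable (B : set (borel X))) /\
  forall mu : probability (borel X) R, invariant_measure h mu -> mu B = 0%E.

Definition boundary (X : topologicalType) (A : set X) : set X :=
  closure A `\` interior A.

(* A minimal homeomorphism of an infinite Hausdorff space has no periodic
   point, so every point has arbitrarily small open neighbourhoods E whose
   preimages E, h^-1 E, ..., h^-N E are pairwise disjoint; every invariant
   probability then gives E mass at most 1/(N+1).
   The rest relies on a uniform estimate: a closed universally null set C has
   an open neighbourhood V with mu V < eps for every mu in M_h(X).  Otherwise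
   pick, for every open V containing C, some mu_V in M_h(X) with mu_V V >= eps;
   the limit of mu_V(O) along an ultrafilter refining "V shrinks to C" is a
   content on open sets, and the regularization from the proof of the Riesz
   representation theorem turns it into some mu in M_h(X) with mu C >= eps.
   Applied to C the boundary of U or K, this gives (2)-(4) by removing from U,
   or adding to K, a neighbourhood of the boundary whose closure lies in V. *)

From HB Require Import structures.
From mathcomp Require Import all_boot all_order all_algebra.
From mathcomp Require Import all_classical all_reals all_analysis.
From mathcomp Require Import lra.
Set Implicit Arguments. Unset Strict Implicit. Unset Printing Implicit Defensive.
Import Order.TTheory GRing.Theory Num.Theory.
Import numFieldTopology.Exports numFieldNormedType.Exports.
Local Open Scope classical_set_scope.
Local Open Scope ring_scope.

Lemma closure_sub_closed (T : topologicalType) (A B : set T) :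
  closed B -> A `<=` B -> closure A `<=` B.
Proof. by move=> cB AB; rewrite (closure_id B).1 //; exact: closureS. Qed.

Lemma closed_boundary (T : topologicalType) (A : set T) : closed (boundary A).
Proof. by apply: closedI; [exact: closed_closure | exact/open_closedC/open_interior]. Qed.

Lemma open_setD (T : topologicalType) (A B : set T) :
  open A -> closed B -> open (A `\` B).
Proof. by move=> oA cB; rewrite setDE; apply: openI => //; exact: closed_openC. Qed.

Lemma continuous_iter (X : topologicalType) (h : X -> X) k :
  continuous h -> continuous (iter k h).
Proof.
move=> ch; elim: k => [|k IH] x; first by move=> A.
exact: continuous_comp (IH x) (ch _).
Qed.

Section compact_hausdorff.
Variable X : ptopologicalType.
Hypotheses (hX : hausdorff_space X) (cX : compact [set: X]).

Lemma open_closure_shrink (A B : set X) : closed A -> open B -> A `<=` B ->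
  exists P, [/\ open P, A `<=` P & closure P `<=` B].
Proof.
move=> cA oB AB.
have nbhsB : set_nbhs A B by apply/set_nbhsP; exists B; split.
have [W /set_nbhsP[P [oP AP PW]] WB] := compact_normal hX cX cA nbhsB.
by exists P; split => //; exact: subset_trans (closureS PW) WB.
Qed.

Lemma separate_closed (A B : set X) : closed A -> closed B -> A `&` B = set0 ->
  exists U V, [/\ open U, open V, A `<=` U, B `<=` V & U `&` V = set0].
Proof.
move=> cA cB /disjoints_subset AB.
have [P [oP AP PB]] := open_closure_shrink cA (closed_openC cB) AB.
exists P, (~` closure P); split => //.
- exact/closed_openC/closed_closure.
- by rewrite -[B]setCK; exact: subsetC.
- by apply/disjoints_subset; rewrite setCK; exact: subset_closure.
Qed.

Lemma closed_cover_split (F A B : set X) : closed F -> open A -> open B ->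
  F `<=` A `|` B ->
  exists F1 F2, [/\ closed F1, closed F2, F1 `<=` A, F2 `<=` B & F `<=` F1 `|` F2].
Proof.
move=> cF oA oB FAB.
have cFB : closed (F `&` ~` B) by apply: closedI => //; exact: open_closedC.
have cFA : closed (F `&` ~` A) by apply: closedI => //; exact: open_closedC.
have [U [V [oU oV FBU FAV UV]]] : exists U V, [/\ open U, open V,
    F `&` ~` B `<=` U, F `&` ~` A `<=` V & U `&` V = set0].
  apply: separate_closed => //; apply/seteqP; split => // x [[Fx nBx] [_ nAx]].
  by case: (FAB x Fx).
exists (F `&` ~` V), (F `&` ~` U); split.
- by apply: closedI => //; exact: open_closedC.
- by apply: closedI => //; exact: open_closedC.
- by move=> x [Fx nVx]; apply: contrapT => nAx; exact: nVx (FAV x (conj Fx nAx)).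
- by move=> x [Fx nUx]; apply: contrapT => nBx; exact: nUx (FBU x (conj Fx nBx)).
- move=> x Fx; have [Vx|] := pselect (V x); last by left.
  by right; split => // Ux; have : (U `&` V) x by []; rewrite UV.
Qed.

Lemma closed_cover_finite (F : set X) (O : nat -> set X) : closed F ->
  (forall i, open (O i)) -> F `<=` \bigcup_i O i ->
  exists n, F `<=` \big[setU/set0]_(i < n) O i.
Proof.
move=> cF oO FO.
have : compact F by exact: subclosed_compact cF cX _.
rewrite compact_cover => /(_ nat setT O) [].
- by move=> i _; exact: oO.
- by move=> y /FO [i _ Oi]; exists i.
move=> D _ FD; exists (\max_(i <- finmap.enum_fset D) i).+1.
rewrite -bigcup_mkord => y /FD [i Di Oi]; exists i => //=.
by rewrite ltnS; exact: leq_bigmax_seq.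
Qed.

End compact_hausdorff.

Lemma open_measurable (X : ptopologicalType) (A : set X) :
  open A -> measurable (A : set (borel X)).
Proof. exact: sub_gen_smallest. Qed.

Lemma le_measure_open (R : realType) (X : ptopologicalType)
    (mu : {measure set (borel X) -> \bar R}) (A B : set X) :
  open A -> open B -> A `<=` B -> (mu A <= mu B)%E.
Proof. by move=> oA oB AB; apply: le_measure => //; rewrite inE; exact: open_measurable. Qed.

Section real_probability.
Variables (R : realType) (X : ptopologicalType) (mu : probability (borel X) R).

Definition pr (A : set X) : R := fine (mu A).

Lemma prE (A : set (borel X)) : measurable A -> mu A = (pr A)%:E.
Proof. by move=> mA; rewrite /pr fineK // fin_num_measure. Qed.

Lemma pr_ge0 (A : set (borel X)) : measurable A -> 0 <= pr A.
Proof. by move=> mA; rewrite -lee_fin -prE. Qed.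

Lemma pr_le1 (A : set (borel X)) : measurable A -> pr A <= 1.
Proof. by move=> mA; rewrite -lee_fin -prE //; exact: probability_le1. Qed.

Lemma prU (A B : set (borel X)) : measurable A -> measurable B ->
  A `&` B = set0 -> pr (A `|` B) = pr A + pr B.
Proof.
move=> mA mB AB; apply/EFin_inj; rewrite EFinD -!prE //; last exact: measurableU.
exact: measureU.
Qed.

Lemma prU2 (A B : set (borel X)) : measurable A -> measurable B ->
  pr (A `|` B) <= pr A + pr B.
Proof.
move=> mA mB; rewrite -lee_fin EFinD -!prE //; last exact: measurableU.
exact: measureU2.
Qed.

Lemma pr0 : pr set0 = 0.
Proof. by rewrite /pr measure0. Qed.

Lemma prT : pr setT = 1.
Proof. by rewrite /pr probability_setT. Qed.

End real_probability.

(** * Measures from contents on a compact Hausdorff space *)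

Section content_measure.
Variables (R : realType) (X : ptopologicalType).
Hypotheses (hX : hausdorff_space X) (cX : compact [set: X]).
Variable lam : set X -> R.
Hypotheses (lam_ge0 : forall O, open O -> 0 <= lam O)
  (lam_subadd : forall A B, open A -> open B -> lam (A `|` B) <= lam A + lam B)
  (lam_supadd : forall A B O, open A -> open B -> open O -> A `&` B = set0 ->
     A `<=` O -> B `<=` O -> lam A + lam B <= lam O)
  (lam0 : lam set0 = 0) (lamT : lam setT = 1).

(* As in the proof of the Riesz representation theorem, the content [lam] of
   open sets is regularized into [kap] on closed sets, then into an inner
   regular [rho] on open sets, and finally into the outer measure [mout]. *)
Definition kap (F : set X) : R :=
  inf [set lam O | O in [set O | open O /\ F `<=` O]].

Definition rho (G : set X) : R :=
  sup [set kap F | F in [set F | closed F /\ F `<=` G]].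

Definition mout (A : set X) : R :=
  inf [set rho G | G in [set G | open G /\ A `<=` G]].

Lemma kap_le F O : open O -> F `<=` O -> kap F <= lam O.
Proof.
move=> oO FO; apply: ge_inf; last by exists O.
by exists 0 => _ [U [oU _] <-]; exact: lam_ge0.
Qed.

Lemma kap_ge F c : (forall O, open O -> F `<=` O -> c <= lam O) -> c <= kap F.
Proof.
move=> H; apply: lb_le_inf => [|_ [V [oV FV] <-]]; last exact: H.
by exists (lam setT), setT => //; split => //; exact: openT.
Qed.

Lemma kap_le1 F : kap F <= 1.
Proof. by rewrite -lamT; apply: kap_le => //; exact: openT. Qed.

Lemma kap_mono F G : F `<=` G -> kap F <= kap G.
Proof. by move=> FG; apply: kap_ge => O oO GO; apply: kap_le => //; exact: subset_trans GO. Qed.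

Lemma kap0 : kap set0 = 0.
Proof.
apply: le_anti; apply/andP; split; first by rewrite -lam0; exact: kap_le open0 _.
by apply: kap_ge => O oO _; exact: lam_ge0.
Qed.

Lemma kapT : kap setT = 1.
Proof.
apply: le_anti; rewrite kap_le1 /=; apply: kap_ge => O oO TO.
by rewrite (_ : O = setT) ?lamT //; apply/seteqP; split.
Qed.

Lemma kapU F G : kap (F `|` G) <= kap F + kap G.
Proof.
suff : kap (F `|` G) - kap G <= kap F by lra.
apply: kap_ge => O oO FO.
suff : kap (F `|` G) - lam O <= kap G by lra.
apply: kap_ge => O' oO' GO'.
have := kap_le (openU oO oO') (setUSS FO GO'); have := lam_subadd oO oO'; lra.
Qed.

Lemma kap_disjU F G : closed F -> closed G -> F `&` G = set0 ->
  kap F + kap G <= kap (F `|` G).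
Proof.
move=> cF cG FG; apply: kap_ge => O oO FGO.
have [U [V [oU oV FU GV UV]]] := separate_closed hX cX cF cG FG.
have OUF : F `<=` O `&` U by move=> x Fx; split; [apply: FGO; left | exact: FU].
have OVG : G `<=` O `&` V by move=> x Gx; split; [apply: FGO; right | exact: GV].
have := kap_le (openI oO oU) OUF; have := kap_le (openI oO oV) OVG.
have : lam (O `&` U) + lam (O `&` V) <= lam O.
  apply: lam_supadd; try exact: openI; try exact: subIsetl.
  by rewrite setIACA UV setI0.
lra.
Qed.

Lemma rho_ge F G : closed F -> F `<=` G -> kap F <= rho G.
Proof.
move=> cF FG; apply: ub_le_sup; last by exists F.
by exists 1 => _ [K _ <-]; exact: kap_le1.
Qed.

Lemma rho_le G c : (forall F, closed F -> F `<=` G -> kap F <= c) -> rho G <= c.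
Proof.
move=> H; apply: ge_sup => [|_ [F [cF FG] <-]]; last exact: H.
by exists (kap set0), set0 => //; split => //; exact: closed0.
Qed.

Lemma rho_ge0 G : 0 <= rho G.
Proof. by rewrite -kap0; exact: rho_ge closed0 (sub0set _). Qed.

Lemma rho0 : rho set0 = 0.
Proof.
apply: le_anti; rewrite rho_ge0 andbT; apply: rho_le => F _; rewrite subset0 => ->.
by rewrite kap0.
Qed.

Lemma rhoT : rho setT = 1.
Proof.
apply: le_anti; apply/andP; split; first by apply: rho_le => F _ _; exact: kap_le1.
by rewrite -kapT; apply: rho_ge => //; exact: closedT.
Qed.

Lemma kap_le_sum_rho (O : nat -> set X) n : (forall i, open (O i)) ->
  forall F, closed F -> F `<=` \big[setU/set0]_(i < n) O i ->
  kap F <= \sum_(i < n) rho (O i).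
Proof.
move=> oO; elim: n => [|n IH] F cF.
  by rewrite !big_ord0 subset0 => ->; rewrite kap0.
rewrite !big_ord_recr /= => FO.
have oOn : open (\big[setU/set0]_(i < n) O i).
  by rewrite -bigcup_mkord; exact: bigcup_open.
have [F1 [F2 [cF1 cF2 F1O F2O FF]]] := closed_cover_split hX cX cF oOn (oO n) FO.
have := kap_mono FF; have := kapU F1 F2; have := IH _ cF1 F1O.
have := rho_ge cF2 F2O; lra.
Qed.

Lemma rho_sigma_subadditive (O : nat -> set X) : (forall i, open (O i)) ->
  ((rho (\bigcup_i O i))%:E <= \sum_(i <oo) (rho (O i))%:E)%E.
Proof.
move=> oO.
have : (0 <= \sum_(i <oo) (rho (O i))%:E)%E.
  by apply: nneseries_ge0 => i _; rewrite lee_fin rho_ge0.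
case Es : (\sum_(i <oo) _)%E => [r| |] // _; last by rewrite leey.
rewrite lee_fin; apply: rho_le => F cF FO.
have [n Fn] := closed_cover_finite cX cF oO FO.
apply: le_trans (kap_le_sum_rho oO cF Fn) _.
rewrite -lee_fin -Es -sumEFin -(big_mkord xpredT (fun i => (rho (O i))%:E)).
by apply: nneseries_lim_ge => i _; rewrite lee_fin rho_ge0.
Qed.

Lemma mout_le A G : open G -> A `<=` G -> mout A <= rho G.
Proof.
move=> oG AG; apply: ge_inf; last by exists G.
by exists 0 => _ [U _ <-]; exact: rho_ge0.
Qed.

Lemma mout_ge A c : (forall G, open G -> A `<=` G -> c <= rho G) -> c <= mout A.
Proof.
move=> H; apply: lb_le_inf => [|_ [G [oG AG] <-]]; last exact: H.
by exists (rho setT), setT => //; split => //; exact: openT.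
Qed.

Lemma mout_ge0 A : 0 <= mout A.
Proof. by apply: mout_ge => G _ _; exact: rho_ge0. Qed.

Lemma mout_mono A B : A `<=` B -> mout A <= mout B.
Proof. by move=> AB; apply: mout_ge => G oG BG; apply: mout_le => //; exact: subset_trans BG. Qed.

Lemma mout0 : mout set0 = 0.
Proof. by apply: le_anti; rewrite mout_ge0 andbT -rho0; exact: mout_le open0 _. Qed.

Lemma moutT : mout setT = 1.
Proof.
apply: le_anti; apply/andP; split; first by rewrite -rhoT; exact: mout_le openT _.
by rewrite -rhoT; apply: mout_ge => G _; rewrite subTset => ->.
Qed.

Lemma kap_le_mout F : closed F -> kap F <= mout F.
Proof. by move=> cF; apply: mout_ge => G _ FG; exact: rho_ge. Qed.

Lemma mout_approx A e : 0 < e -> exists G, [/\ open G, A `<=` G & rho G <= mout A + e].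
Proof.
move=> e0; apply: contrapT => H.
suff : mout A + e <= mout A by lra.
apply: mout_ge => G oG AG; rewrite leNgt; apply/negP => lt.
by apply: H; exists G; split => //; exact: ltW.
Qed.

Lemma mout_sigma_subadditive (A : nat -> set X) :
  ((mout (\bigcup_i A i))%:E <= \sum_(i <oo) (mout (A i))%:E)%E.
Proof.
apply/lee_addgt0Pr => e e0.
have ep i : 0 < e / (2 ^ i.+1)%:R by apply: divr_gt0 => //; rewrite ltr0n expn_gt0.
pose G i := projT1 (cid (mout_approx (A i) (ep i))).
have [oG AG rhoG] : [/\ forall i, open (G i), forall i, A i `<=` G i &
    forall i, rho (G i) <= mout (A i) + e / (2 ^ i.+1)%:R].
  by split => i; case: (projT2 (cid (mout_approx (A i) (ep i)))).
apply: (@le_trans _ _ (rho (\bigcup_i G i))%:E).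
  rewrite lee_fin; apply: mout_le; first exact: bigcup_open.
  by move=> x [i _ /AG Gx]; exists i.
apply: le_trans (rho_sigma_subadditive oG) _.
apply: le_trans (epsilon_trick _ _ (ltW e0)); last by move=> i; rewrite lee_fin mout_ge0.
by apply: lee_nneseries => i _; rewrite ?lee_fin ?rho_ge0 // -EFinD lee_fin.
Qed.

Lemma mout_split_open (O : set X) A : open O ->
  mout (A `&` O) + mout (A `&` ~` O) <= mout A.
Proof.
move=> oO; apply: mout_ge => G oG AG.
have AOGO : A `&` O `<=` G `&` O by move=> x [/AG].
have := mout_le (openI oG oO) AOGO.
suff : rho (G `&` O) <= rho G - mout (A `&` ~` O) by lra.
apply: rho_le => F1 cF1 F1GO.
have moutAO : mout (A `&` ~` O) <= rho (G `&` ~` F1).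
  apply: mout_le; first by apply: openI => //; exact: closed_openC.
  by move=> x [Ax nOx]; split; [exact: AG | move=> /F1GO []].
suff : rho (G `&` ~` F1) <= rho G - kap F1 by lra.
apply: rho_le => F2 cF2 F2G.
have F12 : F1 `&` F2 = set0.
  by apply/disjoints_subset => x F1x /F2G [_ /(_ F1x)].
have := kap_disjU cF1 cF2 F12.
have : kap (F1 `|` F2) <= rho G.
  by apply: rho_ge; [exact: closedU | move=> x [/F1GO [] | /F2G []]].
lra.
Qed.

Definition moutE (A : set X) : \bar R := (mout A)%:E.

Let moutE0 : moutE set0 = 0%E.
Proof. by rewrite /moutE mout0. Qed.

Let moutE_ge0 A : (0 <= moutE A)%E.
Proof. by rewrite lee_fin mout_ge0. Qed.

Let moutE_mono : {homo moutE : A B / A `<=` B >-> (A <= B)%E}.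
Proof. by move=> A B AB; rewrite lee_fin mout_mono. Qed.

HB.instance Definition _ := isOuterMeasure.Build R X moutE
  moutE0 moutE_ge0 moutE_mono mout_sigma_subadditive.

Lemma borel_caratheodory (A : set (borel X)) : measurable A ->
  moutE.-caratheodory A.
Proof.
move=> mA; apply: (smallest_sub _ _ mA); last first.
  move=> O oO; apply: le_caratheodory_measurable => B.
  by rewrite -EFinD lee_fin; exact: mout_split_open.
split.
- exact: caratheodory_measurable_set0.
- by move=> B cB; rewrite setTD; exact: caratheodory_measurable_setC.
- by move=> F cF; exact: caratheodory_measurable_bigcup.
Qed.

Definition content_measure : set (borel X) -> \bar R := moutE.

Let content_measure0 : content_measure set0 = 0%E.
Proof. exact: moutE0. Qed.

Let content_measure_ge0 A : (0 <= content_measure A)%E.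
Proof. exact: moutE_ge0. Qed.

Let content_measure_sigma_additive : semi_sigma_additive content_measure.
Proof.
move=> F mF tF mUF; apply: caratheodory_measure_sigma_additive => //.
- by move=> i; exact: borel_caratheodory.
- exact: borel_caratheodory.
Qed.

HB.instance Definition _ := isMeasure.Build _ _ _ content_measure
  content_measure0 content_measure_ge0 content_measure_sigma_additive.

Let content_measureT : content_measure setT = 1%E.
Proof. by rewrite /content_measure /moutE moutT. Qed.

HB.instance Definition _ :=
  Measure_isProbability.Build _ _ _ content_measure content_measureT.

Section invariance.
Variable f : X -> X.
Hypotheses (cf : continuous f)
  (lam_f : forall O, open O -> lam (f @^-1` O) = lam O).

Let open_preimage O : open O -> open (f @^-1` O).
Proof. exact: (continuousP f).1 cf O. Qed.

Lemma kap_le_image F : kap F <= kap (f @` F).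
Proof.
apply: kap_ge => O oO fFO; rewrite -lam_f //; apply: kap_le; first exact: open_preimage.
by move=> x Fx; apply: fFO; exists x.
Qed.

Lemma rho_preimage_le G : rho (f @^-1` G) <= rho G.
Proof.
apply: rho_le => F cF FG; apply: le_trans (kap_le_image F) _; apply: rho_ge.
  apply: compact_closed hX _; apply: continuous_compact.
    exact: continuous_subspaceT.
  exact: subclosed_compact cF cX _.
by move=> _ [x /FG Gfx <-].
Qed.

Lemma mout_preimage_le A : mout (f @^-1` A) <= mout A.
Proof.
apply: mout_ge => G oG AG; apply: le_trans (rho_preimage_le G).
by apply: mout_le; [exact: open_preimage | move=> x /AG].
Qed.

End invariance.

Definition content_probability : probability (borel X) R := content_measure.

Lemma content_probability_ge (F : set X) c : closed F ->
  (forall O, open O -> F `<=` O -> c <= lam O) ->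
  (c%:E <= content_probability F)%E.
Proof. by move=> cF cF_lam; rewrite lee_fin (le_trans (kap_ge cF_lam)) ?kap_le_mout. Qed.

Lemma content_probability_invariant (h g : X -> X) : cancel g h ->
  continuous h -> continuous g ->
  (forall O, open O -> lam (h @^-1` O) = lam O) ->
  (forall O, open O -> lam (g @^-1` O) = lam O) ->
  invariant_measure h content_probability.
Proof.
move=> gK ch cg lam_h lam_g A _; congr EFin; apply: le_anti.
rewrite (mout_preimage_le ch lam_h) /=.
have {1}-> : A = g @^-1` (h @^-1` A) by apply/seteqP; split => x /=; rewrite gK.
exact: (mout_preimage_le cg lam_g).
Qed.

End content_measure.

(** * Ultralimits of invariant measures *)

Lemma ultra_cvg_compact (T : Type) (V : topologicalType) (U : set_system T)
    (a : T -> V) (K : set V) :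
  UltraFilter U -> compact K -> (forall t, K (a t)) -> exists p : V, a @ U --> p.
Proof.
move=> UU cK aK; have [|p [_ clp]] := cK (a @ U) _.
  by suff : U (a @^-1` K) by []; apply: filterE.
exists p => B /= pB; have [//|UnB] := in_ultra_setVsetC (a @^-1` B) UU.
by have [x []] := clp (~` B) B UnB pB.
Qed.

Lemma cvgr_to_le_pointwise (T : Type) (U : set_system T) {FU : ProperFilter U}
    (R : realFieldType) (f g : T -> R) a b :
  f @ U --> a -> g @ U --> b -> (forall t, f t <= g t) -> a <= b.
Proof.
move=> fa gb fg; rewrite -subr_ge0; apply: (cvgr_to_ge (cvgB gb fa)).
by apply: filterE => t; rewrite subr_ge0.
Qed.

Section ultralimit_content.
Variables (R : realType) (X : ptopologicalType) (I : Type) (U : set_system I).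
Hypothesis UU : UltraFilter U.
Variable m : I -> probability (borel X) R.

Definition ulim_content (A : set X) : R := lim ((fun i => pr (m i) A) @ U).

Lemma ulim_content_cvg (A : set (borel X)) : measurable A ->
  (fun i => pr (m i) A) @ U --> ulim_content A.
Proof.
move=> mA; have [|p mAp] :=
  ultra_cvg_compact (a := fun i => pr (m i) A) UU (@segment_compact R 0 1).
  by move=> i; rewrite /= in_itv /= pr_ge0 ?pr_le1.
by rewrite /ulim_content (cvg_lim _ mAp).
Qed.

Lemma ulim_content_ge0 O : open O -> 0 <= ulim_content O.
Proof.
move=> /open_measurable mO; apply: (cvgr_to_ge (ulim_content_cvg mO)).
by apply: filterE => i; exact: pr_ge0.
Qed.

Lemma ulim_content_ge (O : set X) c : open O ->
  U [set i | (c%:E <= m i O)%E] -> c <= ulim_content O.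
Proof.
move=> /open_measurable mO Uc; apply: (cvgr_to_ge (ulim_content_cvg mO)).
by apply: filterS Uc => i; rewrite /= (prE _ mO) lee_fin.
Qed.

Lemma ulim_content_subadd A B : open A -> open B ->
  ulim_content (A `|` B) <= ulim_content A + ulim_content B.
Proof.
move=> /open_measurable mA /open_measurable mB.
apply: cvgr_to_le_pointwise (ulim_content_cvg (measurableU _ _ mA mB))
  (cvgD (ulim_content_cvg mA) (ulim_content_cvg mB)) _.
by move=> i; rewrite fctE; exact: prU2.
Qed.

Lemma ulim_content_supadd A B O : open A -> open B -> open O -> A `&` B = set0 ->
  A `<=` O -> B `<=` O -> ulim_content A + ulim_content B <= ulim_content O.
Proof.
move=> oA oB oO AB AO BO.
have [mA mB mO] := And3 (open_measurable oA) (open_measurable oB) (open_measurable oO).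
apply: cvgr_to_le_pointwise (cvgD (ulim_content_cvg mA) (ulim_content_cvg mB))
  (ulim_content_cvg mO) _.
move=> i; rewrite fctE -prU // -lee_fin -!prE //; last exact: measurableU.
by apply: le_measure_open => //; [exact: openU | move=> x [/AO | /BO]].
Qed.

Lemma ulim_content0 : ulim_content set0 = 0.
Proof.
rewrite /ulim_content (_ : (fun i => pr (m i) set0) = fun=> 0) ?lim_cst //.
by apply/funext => i; rewrite pr0.
Qed.

Lemma ulim_contentT : ulim_content setT = 1.
Proof.
rewrite /ulim_content (_ : (fun i => pr (m i) setT) = fun=> 1) ?lim_cst //.
by apply/funext => i; rewrite prT.
Qed.

Lemma ulim_content_preimage (f : X -> X) O :
  (forall i, (m i) (f @^-1` O) = m i O) -> ulim_content (f @^-1` O) = ulim_content O.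
Proof.
move=> mf; rewrite /ulim_content (_ : (fun i => _) = fun i => pr (m i) O) //.
by apply/funext => i; rewrite /pr mf.
Qed.

End ultralimit_content.

Lemma invariant_ulim_probability (R : realType) (X : ptopologicalType)
    (h : X -> X) (I : Type) (U : set_system I) (m : I -> probability (borel X) R) :
  hausdorff_space X -> compact [set: X] -> homeomorphism h -> UltraFilter U ->
  (forall i, invariant_measure h (m i)) ->
  exists nu : probability (borel X) R, invariant_measure h nu /\
    forall (F : set X) c, closed F ->
    (forall O, open O -> F `<=` O -> U [set i | (c%:E <= m i O)%E]) ->
    (c%:E <= nu F)%E.
Proof.
move=> hX cX [g [hK gK ch cg]] UU inv_m.
have lam_h O : open O -> ulim_content U m (h @^-1` O) = ulim_content U m O.
  by move=> oO; apply: ulim_content_preimage => i; exact: inv_m i O (open_measurable oO).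
have lam_g O : open O -> ulim_content U m (g @^-1` O) = ulim_content U m O.
  move=> oO; apply: ulim_content_preimage => i.
  rewrite -(inv_m i (g @^-1` O)); last exact: open_measurable ((continuousP g).1 cg O oO).
  by congr (m i _); apply/seteqP; split => x /=; rewrite hK.
exists (content_probability hX cX (ulim_content_ge0 UU m) (ulim_content_subadd UU m)
  (ulim_content_supadd UU m) (ulim_content0 UU m) (ulim_contentT UU m)).
split; first exact: content_probability_invariant gK ch cg lam_h lam_g.
move=> F c cF FU; apply: content_probability_ge => // O oO FO.
exact: ulim_content_ge (FU O oO FO).
Qed.

Lemma filter_below_proper (T : Type) (D : set (set T)) :
  D !=set0 -> (forall A B, D A -> D B -> D (A `&` B)) ->
  ProperFilter (filter_from D (fun A => [set B | D B /\ B `<=` A])).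
Proof.
move=> [A0 DA0] DI; apply: filter_from_proper; last by move=> A DA; exists A; split.
apply: filter_from_filter; first by exists A0.
move=> A1 A2 DA1 DA2; exists (A1 `&` A2); first exact: DI.
move=> B [DB BA]; split; split => //; apply: subset_trans BA _;
  [exact: subIsetl | exact: subIsetr].
Qed.

Lemma universally_null_small_nbhd (R : realType) (X : ptopologicalType) (h : X -> X) :
  hausdorff_space X -> compact [set: X] -> homeomorphism h ->
  forall C : set X, closed C -> universally_null R h C ->
  forall eps : R, 0 < eps ->
  exists V, [/\ open V, C `<=` V & forall mu : probability (borel X) R,
    invariant_measure h mu -> (mu V < eps%:E)%E].
Proof.
move=> hX cX hh C cC [_ nullC] eps eps0; apply: contrapT => noV.
pose D := [set V : set X | open V /\ C `<=` V].
have heavy V : D V -> exists mu : probability (borel X) R,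
    invariant_measure h mu /\ (eps%:E <= mu V)%E.
  move=> [oV CV]; apply: contrapT => nmu; apply: noV; exists V; split => // mu imu.
  by rewrite ltNge; apply/negP => le; apply: nmu; exists mu.
have [mu0 [imu0 _]] := heavy setT (conj openT (@subsetT _ C)).
have pick V : {mu : probability (borel X) R |
    invariant_measure h mu /\ (D V -> (eps%:E <= mu V)%E)}.
  apply: cid; have [DV|nDV] := pselect (D V); last by exists mu0.
  by have [mu [imu le]] := heavy V DV; exists mu.
have FD : ProperFilter (filter_from D (fun A => [set B | D B /\ B `<=` A])).
  apply: filter_below_proper; first by exists setT; split => //; exact: openT.
  by move=> A B [oA CA] [oB CB]; split; [exact: openI | rewrite subsetI].
have [U [UU sU]] := ultraFilterLemma FD.
have [nu [inu nuC]] :=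
  invariant_ulim_probability hX cX hh UU (fun V => (projT2 (pick V)).1).
have : (eps%:E <= nu C)%E.
  apply: nuC => // O oO CO; apply: sU; exists O => // V [DV VO].
  apply: le_trans ((projT2 (pick V)).2 DV) _.
  exact: le_measure_open DV.1 oO VO.
by rewrite nullC // leNgt lte_fin eps0.
Qed.

(** * Small open sets for minimal homeomorphisms *)

Lemma minimal_aperiodic (X : topologicalType) (h : X -> X) :
  hausdorff_space X -> ~ finite_set [set: X] -> minimal_map h ->
  forall x n, (0 < n)%N -> iter n h x <> x.
Proof.
move=> hX infX hmin x n n0 per.
pose A := [set iter k h x | k in `I_n].
have fA : finite_set A by exact/finite_image/finite_II.
have cA : closed A by apply: compact_closed => //; exact: finite_compact.
have hA : h @` A = A.
  apply/seteqP; split.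
    move=> _ [_ [k kn <-] <-]; rewrite -iterS.
    have [k1n|] := ltnP k.+1 n; first by exists k.+1.
    move=> nk; have -> : k.+1 = n by apply/eqP; rewrite eqn_leq nk andbT.
    by rewrite per; exists 0%N.
  move=> _ [[|k] kn <-]; last by exists (iter k h x) => //; exists k => //; exact: ltnW.
  exists (iter n.-1 h x); first by exists n.-1 => //; rewrite /= ltn_predL.
  by rewrite -iterS prednK.
have [A0|AT] := hmin A cA hA; last by apply: infX; rewrite -AT.
suff : A x by rewrite A0.
by exists 0%N.
Qed.

Lemma wandering_open_nbhd (X : topologicalType) (h : X -> X) (x : X) (U : set X) :
  hausdorff_space X -> continuous h -> (forall n, (0 < n)%N -> iter n h x <> x) ->
  open U -> U x -> forall N, exists E, [/\ open E, E x, E `<=` U &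
    forall k, (0 < k <= N)%N -> forall z, E z -> ~ E (iter k h z)].
Proof.
move=> hX ch aper oU Ux; elim=> [|N [E [oE Ex EU wE]]].
  by exists U; split => // k; rewrite leqn0 andbC => /andP[/eqP ->].
have xNx : x != iter N.+1 h x by apply/eqP => /esym; exact: aper.
move: (hX); rewrite open_hausdorff => /(_ _ _ xNx) [[P Q] /= [/[!inE] Px Qx] [oP oQ PQ]].
exists (E `&` P `&` iter N.+1 h @^-1` Q); split => //.
- apply: openI; first exact: openI.
  exact: (continuousP _).1 (continuous_iter ch) _ oQ.
- by move=> z [[/EU]].
move=> k /andP[k0]; rewrite leq_eqVlt => /orP[/eqP -> | kN] z [[Ez Pz] Qz].
  by move=> [[_ Pn] _]; have /(_ _ Pn) := (disjoints_subset P Q).1 PQ; apply.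
by move=> [[En _] _]; apply: (wE k _ z Ez En); rewrite k0 -ltnS.
Qed.

Lemma invariant_measure_iter (R : realType) (X : ptopologicalType) (h : X -> X)
    (mu : probability (borel X) R) k (A : set X) :
  continuous h -> invariant_measure h mu -> open A ->
  mu (iter k h @^-1` A) = mu A.
Proof.
move=> ch imu; elim: k A => // k IH A oA.
rewrite -(imu A (open_measurable oA)); apply: IH.
exact: (continuousP _).1 ch _ oA.
Qed.

Lemma disjoint_iterates_pr_le (R : realType) (X : ptopologicalType) (h : X -> X)
    (mu : probability (borel X) R) (E : set X) N :
  continuous h -> invariant_measure h mu -> open E ->
  (forall k, (0 < k <= N)%N -> forall z, E z -> ~ E (iter k h z)) ->
  N.+1%:R * pr mu E <= 1.
Proof.
move=> ch imu oE wE.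
pose S i := iter i h @^-1` E.
have oS i : open (S i) by exact: (continuousP _).1 (continuous_iter ch) _ oE.
have oUS n : open (\big[setU/set0]_(i < n) S i).
  by rewrite -bigcup_mkord; exact: bigcup_open.
have disjS i j : (i < j <= N)%N -> S i `&` S j = set0.
  move=> /andP[ij jN]; apply/disjoints_subset => y Si.
  have wEji : (0 < j - i <= N)%N.
    by rewrite subn_gt0 ij (leq_trans (leq_subr _ _) jN).
  by rewrite /S /= -(subnK (ltnW ij)) iterD; exact: wE wEji _ Si.
have prS n : (n <= N.+1)%N -> pr mu (\big[setU/set0]_(i < n) S i) = n%:R * pr mu E.
  elim: n => [_|n IH nN]; first by rewrite big_ord0 pr0 mul0r.
  have disj : \big[setU/set0]_(i < n) S i `&` S n = set0.
    rewrite -bigcup_mkord; apply/disjoints_subset => y [i /= iN Si].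
    by apply: (disjoints_subset _ _).1 (disjS i n _) y Si; rewrite iN -ltnS.
  rewrite big_ord_recr /= (prU _ (open_measurable (oUS n)) (open_measurable (oS n)) disj).
  rewrite IH; last exact: ltnW.
  by rewrite /pr invariant_measure_iter // -addn1 natrD mulrDl mul1r.
by rewrite -(prS _ (leqnn _)); apply: pr_le1; exact: open_measurable.
Qed.

Lemma small_open_subset (R : realType) (X : ptopologicalType) (h : X -> X) :
  hausdorff_space X -> ~ finite_set [set: X] -> continuous h -> minimal_map h ->
  forall eps : R, 0 < eps -> forall U : set X, open U -> U !=set0 ->
  exists E : set X, [/\ open E, E !=set0, E `<=` U &
    forall mu : probability (borel X) R, invariant_measure h mu -> (mu E < eps%:E)%E].
Proof.
move=> hX infX ch hmin eps eps0 U oU [x Ux].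
have [N] := ltr_add_invr eps0; rewrite add0r => N_eps.
have [E [oE Ex EU wE]] :=
  wandering_open_nbhd hX ch (@minimal_aperiodic _ h hX infX hmin x) oU Ux N.
exists E; split => //; first by exists x.
move=> mu imu; rewrite (prE _ (open_measurable oE)) lte_fin; apply: le_lt_trans N_eps.
rewrite -[_^-1]mulr1 ler_pdivlMl ?ltr0n //.
exact: disjoint_iterates_pr_le ch imu oE wE.
Qed.

Section approximation.
Variables (R : realType) (X : ptopologicalType) (h : X -> X).
Hypotheses (hX : hausdorff_space X) (cX : compact [set: X]) (hh : homeomorphism h).
Variables (eps : R) (eps0 : 0 < eps).

Lemma open_inner_approx (U : set X) : open U -> universally_null R h (boundary U) ->
  exists E : set X, [/\ open E, E `<=` U, closure E `<=` U &
    forall mu : probability (borel X) R, invariant_measure h mu ->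
      (mu (U `\` closure E) < eps%:E)%E].
Proof.
move=> oU nU.
have [V [oV bV smallV]] :=
  universally_null_small_nbhd hX cX hh (closed_boundary (A := U)) nU eps0.
have [W [oW bW WV]] := open_closure_shrink hX cX (closed_boundary (A := U)) oV bV.
have cEW : closure (U `\` closure W) `<=` ~` W.
  apply: closure_sub_closed; first exact: open_closedC.
  by move=> x [_ nWx] Wx; apply/nWx/subset_closure.
exists (U `\` closure W); split.
- exact/open_setD/closed_closure.
- exact: subDsetl.
- move=> x cEx; apply: contrapT => nUx.
  have cUx : closure U x by exact: closureS (@subDsetl _ U _) _ cEx.
  by apply: (cEW _ cEx); apply: bW; split; last rewrite (interior_id U).1.
move=> mu imu; apply: le_lt_trans (smallV mu imu).
apply: le_measure_open => //; first exact/open_setD/closed_closure.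
move=> x [Ux ncEx]; apply: WV; apply: contrapT => ncWx.
by apply/ncEx/subset_closure.
Qed.

Lemma closed_inner_approx (U : set X) : open U -> U !=set0 ->
  universally_null R h (boundary U) ->
  exists K : set X, [/\ closed K, K `<=` U, interior K !=set0 &
    forall mu : probability (borel X) R, invariant_measure h mu ->
      (mu (U `\` K) < eps%:E)%E].
Proof.
move=> oU [x Ux] nU.
have [E [oE EU cEU smallE]] := open_inner_approx oU nU.
have xU : [set x] `<=` U by move=> _ ->.
have [P [oP xP cPU]] :=
  open_closure_shrink hX cX (compact_closed hX (@compact_set1 _ x)) oU xU.
exists (closure (E `|` P)); split.
- exact: closed_closure.
- by rewrite closureU => y [/cEU | /cPU].
- exists x; apply: filterS (open_nbhs_nbhs (conj oP (xP x erefl))).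
  by move=> y Py; apply: subset_closure; right.
move=> mu imu; apply: le_lt_trans (smallE mu imu).
apply: le_measure_open; try exact/open_setD/closed_closure.
by move=> y [Uy ncy]; split => // cy; apply: ncy; exact: closureS (@subsetUl _ E P) _ cy.
Qed.

Lemma closed_outer_approx (K : set X) : closed K -> universally_null R h (boundary K) ->
  exists E : set X, [/\ open E, K `<=` E &
    forall mu : probability (borel X) R, invariant_measure h mu ->
      (mu (E `\` K) < eps%:E)%E].
Proof.
move=> cK nK.
have [V [oV bV smallV]] :=
  universally_null_small_nbhd hX cX hh (closed_boundary (A := K)) nK eps0.
have oE : open (K° `|` V) by apply: openU => //; exact: open_interior.
exists (K° `|` V); split => //.
- move=> x Kx; have [iKx|niKx] := pselect (K° x); first by left.
  by right; apply: bV; split => //; exact: subset_closure.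
move=> mu imu; apply: le_lt_trans (smallV mu imu).
apply: le_measure_open => //; first exact: open_setD.
by move=> x [[/interior_subset | ] ].
Qed.

End approximation.

Unset Implicit Arguments.
Theorem corollary2p5 (R : realType) (X : pseudoPMetricType R) (h : X -> X) :
  hausdorff_space X ->
  compact [set: X] ->
  ~ finite_set [set: X] ->
  homeomorphism h ->
  minimal_map h ->
  forall eps : R, 0 < eps ->
  (* (1) *)
  (forall U : set X, open U -> U !=set0 ->
     exists E : set X, [/\ open E, E !=set0, E `<=` U &
       forall mu : probability (borel X) R, invariant_measure h mu ->
         (mu E < eps%:E)%E]) /\
  (* (2) *)
  (forall U : set X, open U -> U !=set0 -> universally_null R h (boundary U) ->
     exists K : set X, [/\ closed K, K `<=` U, interior K !=set0 &
       forall mu : probability (borel X) R, invariant_measure h mu ->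
         (mu (U `\` K) < eps%:E)%E]) /\
  (* (3) *)
  (forall U : set X, open U -> U !=set0 -> universally_null R h (boundary U) ->
     exists E : set X, [/\ open E, E `<=` U, closure E `<=` U &
       forall mu : probability (borel X) R, invariant_measure h mu ->
         (mu (U `\` closure E) < eps%:E)%E]) /\
  (* (4) *)
  (forall K : set X, closed K -> universally_null R h (boundary K) ->
     exists E : set X, [/\ open E, K `<=` E &
       forall mu : probability (borel X) R, invariant_measure h mu ->
         (mu (E `\` K) < eps%:E)%E]).
Proof.
move=> hX cX infX hh hmin eps eps0.
have ch : continuous h by case: hh => g [].
split; first exact: small_open_subset hX infX ch hmin eps eps0.
split; first by move=> U oU U0 nU; exact: (closed_inner_approx hX cX hh eps0 oU U0 nU).
split; first by move=> U oU _ nU; exact: (open_inner_approx hX cX hh eps0 oU nU).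
by move=> K cK nK; exact: (closed_outer_approx hX cX hh eps0 cK nK).
Qed.
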